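(* Let $(W,S)$ be a Coxeter system of finite rank and $S'$ another set of Coxeter generators of $W$ with $S'\subseteq S^W$. Let $A\subseteq S$ be an irreducible simplex, let $A',\bar A'\subseteq S'$ be irreducible simplices, and let $u,\bar u\in W$ satisfy $\langle A\rangle=u\langle A'\rangle u^{-1}=\bar u\langle\bar A'\rangle\bar u^{-1}$. Let $\alpha:(\langle A\rangle,A)\to(\langle A'\rangle,A')$ and $\bar\alpha:(\langle A\rangle,A)\to(\langle\bar A'\rangle,\bar A')$ be isomorphisms. Then $u_*\alpha:\langle A\rangle\to\langle A\rangle$ is an inner-by-graph automorphism of $(\langle A\rangle,A)$ if and only if $\bar u_*\bar\alpha:\langle A\rangle\to\langle A\rangle$ is an inner-by-graph automorphism of $(\langle A\rangle,A)$.
   Context: Coxeter system $(W,S)$: $W=\langle S\mid (st)^{m(s,t)}\ (m(s,t)<\infty)\rangle$, $m(s,s)=1$, $m(s,t)=m(t,s)\in\{2,\dots,\infty\}$. $S^W=\{wsw^{-1}\}$. A simplex is $A\subseteq S$ with all $m(s,t)<\infty$; $A$ is irreducible if the graph on $A$ with edges $m(s,t)\ge3$ is connected. An isomorphism $(\langle A\rangle,A)\to(\langle A'\rangle,A')$ is a group isomorphism mapping $A$ onto $A'$. $u_*$ is $w\mapsto uwu^{-1}$. Inner-by-graph automorphism of $(\langle A\rangle,A)$: composite of an inner automorphism of $\langle A\rangle$ and an automorphism mapping $A$ onto $A$. *)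

From Stdlib Require Import List Relations.
Set Implicit Arguments.

Record Group := {
  carrier :> Type;
  gmul : carrier -> carrier -> carrier;
  gone : carrier;
  ginv : carrier -> carrier;
  gmulA : forall x y z, gmul x (gmul y z) = gmul (gmul x y) z;
  gmul1l : forall x, gmul gone x = x;
  gmul1r : forall x, gmul x gone = x;
  gmulVl : forall x, gmul (ginv x) x = gone;
  gmulVr : forall x, gmul x (ginv x) = gone
}.

Arguments gmul {g}.
Arguments gone {g}.
Arguments ginv {g}.

Fixpoint gpow {G : Group} (x : G) (n : nat) : G :=
  match n with O => gone | S k => gmul x (gpow x k) end.

Section Defs.
Variable W : Group.

Definition subgroup (H : W -> Prop) : Prop :=
  H gone /\ (forall x y, H x -> H y -> H (gmul x y)) /\ (forall x, H x -> H (ginv x)).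

Definition gen (X : W -> Prop) : W -> Prop :=
  fun w => forall H, subgroup H -> (forall x, X x -> H x) -> H w.

Definition finite_set (X : W -> Prop) : Prop :=
  exists l : list W, forall x, X x <-> In x l.

(* (W,S) is a Coxeter system: S consists of involutions, generates W, and
   W is presented by <S | (st)^n = 1 whenever this holds in W>, i.e. by the
   relations (st)^{m(s,t)} with m(s,t) the order of st (m(s,s)=1).  The
   presentation is expressed through its universal property. *)
Definition coxeter_system (S : W -> Prop) : Prop :=
  (forall s, S s -> s <> gone /\ gmul s s = gone) /\
  (forall w, gen S w) /\
  (forall (G : Group) (f : W -> G),
     (forall s t n, S s -> S t -> gpow (gmul s t) n = gone ->
        gpow (gmul (f s) (f t)) n = gone) ->
     exists phi : W -> G,
       (forall x y, phi (gmul x y) = gmul (phi x) (phi y)) /\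
       (forall s, S s -> phi s = f s)).

Definition reflections (S : W -> Prop) : W -> Prop :=
  fun r => exists w s, S s /\ r = gmul (gmul w s) (ginv w).

Definition finite_order (x : W) : Prop := exists n, 0 < n /\ gpow x n = gone.

Definition simplex (S A : W -> Prop) : Prop :=
  (forall s, A s -> S s) /\
  (forall s t, A s -> A t -> finite_order (gmul s t)).

(* edge s t in the graph on A: m(s,t) >= 3, i.e. (st)^2 <> 1 *)
Definition cox_edge (A : W -> Prop) (s t : W) : Prop :=
  A s /\ A t /\ gpow (gmul s t) 2 <> gone.

Definition irreducible (A : W -> Prop) : Prop :=
  (exists s, A s) /\
  (forall s t, A s -> A t -> clos_refl_trans W (cox_edge A) s t).

(* an isomorphism (<A>,A) -> (<B>,B), given by a function on W whose
   restriction to <A> is a group isomorphism onto <B> mapping A onto B *)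
Definition pair_iso (A B : W -> Prop) (f : W -> W) : Prop :=
  (forall x, gen A x -> gen B (f x)) /\
  (forall x y, gen A x -> gen A y -> f (gmul x y) = gmul (f x) (f y)) /\
  (forall x y, gen A x -> gen A y -> f x = f y -> x = y) /\
  (forall z, gen B z -> exists x, gen A x /\ f x = z) /\
  (forall a, A a -> B (f a)) /\
  (forall b, B b -> exists a, A a /\ f a = b).

Definition conjmap (u : W) : W -> W := fun w => gmul (gmul u w) (ginv u).

Definition conj_gen_eq (A B : W -> Prop) (u : W) : Prop :=
  forall w, gen A w <-> exists v, gen B v /\ w = conjmap u v.

Definition inner_by_graph (A : W -> Prop) (phi : W -> W) : Prop :=
  exists x beta, gen A x /\ pair_iso A A beta /\
    forall w, gen A w -> phi w = conjmap x (beta w).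

End Defs.

Arguments subgroup {W}. Arguments gen {W}. Arguments finite_set {W}.
Arguments coxeter_system {W}. Arguments reflections {W}.
Arguments finite_order {W}. Arguments simplex {W}. Arguments cox_edge {W}.
Arguments irreducible {W}. Arguments pair_iso {W}. Arguments conjmap {W}.
Arguments conj_gen_eq {W}. Arguments inner_by_graph {W}.

From Stdlib Require Import List Classical ClassicalEpsilon FunctionalExtensionality
  ProofIrrelevance Lia Bool Arith Wf_nat.
Import ListNotations.

(* By symmetry it suffices to transport a decomposition [u_* alpha = x_* beta]
   on <A>, with [x] in <A> and [beta] an automorphism of (<A>,A), to
   [ubar_* alphabar].  The element [ubar^-1 u] conjugates the standard parabolic
   subgroup <A'> of (W,S') onto <Abar'>, so by the parabolic conjugation theorem
   some [w1 = c ubar^-1 u] with [c] in <Abar'> conjugates the generators A' onto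
   Abar'.  Then [ubar_* alphabar = y_* beta'] with [y = ubar c ubar^-1 x] in <A>
   and [beta' = beta o alpha^-1 o (w1^-1)_* o alphabar], which permutes A.

   The parabolic conjugation theorem is proved with a minimal-length element
   [w1] of the coset <J> w: for a reduced J-word X, the word X w1 is reduced,
   which forces [w1 s w1^-1] to have J-length one for s in I.  Lengths are
   controlled by the exchange condition, obtained from Tits' action of W on
   pairs (r, +-1), whose existence follows from the universal property of the
   Coxeter presentation. *)

Infix "**" := gmul (at level 40, left associativity).

Section GroupAlgebra.
Context {G : Group}.
Implicit Types x y z s : G.

Lemma gmulA_r x y z : x ** y ** z = x ** (y ** z).
Proof. now rewrite gmulA. Qed.

Lemma gmulK x y : ginv x ** (x ** y) = y.
Proof. now rewrite gmulA, gmulVl, gmul1l. Qed.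

Lemma gmulKV x y : x ** (ginv x ** y) = y.
Proof. now rewrite gmulA, gmulVr, gmul1l. Qed.

Lemma gmul_injl z x y : z ** x = z ** y -> x = y.
Proof. intro E. now rewrite <- (gmulK z x), E, gmulK. Qed.

Lemma gmul_injr z x y : x ** z = y ** z -> x = y.
Proof.
  intro E. rewrite <- (gmul1r _ x), <- (gmulVr _ z), gmulA, E.
  now rewrite <- gmulA, gmulVr, gmul1r.
Qed.

Lemma ginv_unique x y : x ** y = gone -> ginv x = y.
Proof. intro E. now rewrite <- (gmul1r _ (ginv x)), <- E, gmulK. Qed.

Lemma ginvM x y : ginv (x ** y) = ginv y ** ginv x.
Proof. apply ginv_unique. now rewrite gmulA_r, gmulKV, gmulVr. Qed.

Lemma ginvK x : ginv (ginv x) = x.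
Proof. apply ginv_unique, gmulVl. Qed.

Lemma ginv1 : ginv (@gone G) = gone.
Proof. apply ginv_unique, gmul1l. Qed.

Lemma ginv_invol s : s ** s = gone -> ginv s = s.
Proof. apply ginv_unique. Qed.

Lemma gmul_involK s y : s ** s = gone -> s ** (s ** y) = y.
Proof. intro E. now rewrite gmulA, E, gmul1l. Qed.

End GroupAlgebra.

Ltac gsimpl := repeat progress (
  rewrite ?gmulA_r, ?gmul1l, ?gmul1r, ?gmulK, ?gmulKV, ?gmulVl, ?gmulVr,
    ?ginvM, ?ginvK, ?ginv1;
  repeat match goal with
  | H : ?s ** ?s = gone |- context [?s ** (?s ** ?y)] => rewrite (gmul_involK s y H)
  | H : ?s ** ?s = gone |- context [?s ** ?s] => rewrite H
  end).

Ltac gsimpl_in E := repeat progress (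
  rewrite ?gmulA_r, ?gmul1l, ?gmul1r, ?gmulK, ?gmulKV, ?gmulVl, ?gmulVr,
    ?ginvM, ?ginvK, ?ginv1 in E;
  repeat match goal with
  | H : ?s ** ?s = gone |- _ =>
      match type of E with context [?s ** (?s ** ?y)] => rewrite (gmul_involK s y H) in E end
  | H : ?s ** ?s = gone |- _ =>
      match type of E with context [?s ** ?s] => rewrite H in E end
  end).

Section Powers.
Context {G : Group}.

Lemma gpowD (x : G) a b : gpow x (a + b) = gpow x a ** gpow x b.
Proof. induction a as [|a IH]; simpl; [now gsimpl|]. now rewrite IH, gmulA_r. Qed.

Lemma gpow_commute (x : G) a : gpow x a ** x = x ** gpow x a.
Proof.
  change (x ** gpow x a) with (gpow x (1 + a)).
  rewrite Nat.add_comm, gpowD. simpl. now rewrite gmul1r.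
Qed.

End Powers.

Section Conjugation.
Context {W : Group}.
Implicit Types x y z u v : W.

Lemma conjmapE u z : conjmap u z = u ** (z ** ginv u).
Proof. unfold conjmap. now gsimpl. Qed.

Lemma conjmapM x y z : conjmap (x ** y) z = conjmap x (conjmap y z).
Proof. rewrite !conjmapE. now gsimpl. Qed.

Lemma conjmapK u z : conjmap (ginv u) (conjmap u z) = z.
Proof. rewrite !conjmapE. now gsimpl. Qed.

Lemma conjmapKV u z : conjmap u (conjmap (ginv u) z) = z.
Proof. rewrite !conjmapE. now gsimpl. Qed.

Lemma conjmap_mul u x y : conjmap u (x ** y) = conjmap u x ** conjmap u y.
Proof. rewrite !conjmapE. now gsimpl. Qed.

Lemma conjmap_inj u x y : conjmap u x = conjmap u y -> x = y.
Proof. intro E. now rewrite <- (conjmapK u x), E, conjmapK. Qed.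

End Conjugation.

Section Generation.
Context {W : Group}.
Implicit Types (X : W -> Prop) (L M : list W).

Fixpoint wprod L : W := match L with [] => gone | a :: L => a ** wprod L end.

Definition involutions X : Prop := forall s, X s -> s ** s = gone.

Lemma wprod_app L M : wprod (L ++ M) = wprod L ** wprod M.
Proof. induction L as [|a L IH]; simpl; [now gsimpl|]. now rewrite IH, gmulA_r. Qed.

Lemma ginv_wprod X L : involutions X -> Forall X L -> ginv (wprod L) = wprod (rev L).
Proof.
  intros HX HL; induction HL as [|a L Ha HL IH]; simpl; [apply ginv1|].
  rewrite wprod_app, ginvM, IH, ginv_invol by auto. simpl. now gsimpl.
Qed.

Lemma gen_base X x : X x -> gen X x.
Proof. intros Hx H _ HX; auto. Qed.

Lemma gen1 X : gen X gone.
Proof. intros H [H1 _] _; exact H1. Qed.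

Lemma genM X x y : gen X x -> gen X y -> gen X (x ** y).
Proof.
  intros Hx Hy H HH HX. pose proof HH as (_ & HM & _).
  apply HM; [apply Hx|apply Hy]; auto.
Qed.

Lemma genV X x : gen X x -> gen X (ginv x).
Proof. intros Hx H HH HX. pose proof HH as (_ & _ & HV). apply HV, Hx; auto. Qed.

Lemma gen_conjmap X a x : gen X a -> gen X x -> gen X (conjmap a x).
Proof. intros Ha Hx. apply genM; [apply genM|apply genV]; auto. Qed.

Lemma gen_ind X (P : W -> Prop) x : subgroup P -> (forall y, X y -> P y) -> gen X x -> P x.
Proof. intros HP HX Hx. now apply Hx. Qed.

Lemma gen_wprod X L : Forall X L -> gen X (wprod L).
Proof. induction 1; simpl; [apply gen1|]. apply genM; auto. now apply gen_base. Qed.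

Lemma gen_word X w : involutions X -> gen X w -> exists L, Forall X L /\ wprod L = w.
Proof.
  intros HX Hw. apply (gen_ind X (fun w => exists L, Forall X L /\ wprod L = w)); auto.
  - split; [|split].
    + now exists [].
    + intros x y (L & HL & <-) (M & HM & <-). exists (L ++ M).
      split; [now apply Forall_app|apply wprod_app].
    + intros x (L & HL & <-). exists (rev L).
      split; [now apply Forall_rev|symmetry; now apply (ginv_wprod X)].
  - intros y Hy. exists [y]. split; auto. simpl. now gsimpl.
Qed.

Lemma gen_conjmap_image X w v :
  gen X v -> gen (fun y => exists s, X s /\ y = conjmap w s) (conjmap w v).
Proof.
  apply (gen_ind X (fun v => gen _ (conjmap w v))).
  - split; [|split].
    + rewrite conjmapE. gsimpl. apply gen1.
    + intros x y Hx Hy. rewrite conjmap_mul. now apply genM.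
    + intros x Hx. replace (conjmap w (ginv x)) with (ginv (conjmap w x))
        by (rewrite !conjmapE; now gsimpl).
      now apply genV.
  - intros y Hy. apply gen_base. now exists y.
Qed.

Lemma conj_gen_eq_quot (A B C : W -> Prop) u v :
  conj_gen_eq A B u -> conj_gen_eq A C v -> conj_gen_eq C B (ginv v ** u).
Proof.
  intros CB CC z; split.
  - intro Hz. destruct (proj1 (CB (conjmap v z))) as (z' & Hz' & E).
    { apply CC. eauto. }
    exists z'. split; auto. now rewrite conjmapM, <- E, conjmapK.
  - intros (z' & Hz' & ->). rewrite conjmapM.
    destruct (proj1 (CC (conjmap u z'))) as (z'' & Hz'' & E).
    { apply CB. eauto. }
    now rewrite E, conjmapK.
Qed.

Lemma conj_gen_eq_mul_l (J I : W -> Prop) c w :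
  gen J c -> conj_gen_eq J I w -> conj_gen_eq J I (c ** w).
Proof.
  intros Hc Cw z. split.
  - intro Hz. destruct (proj1 (Cw (conjmap (ginv c) z))) as (v & Hv & E).
    { apply gen_conjmap; [now apply genV|exact Hz]. }
    exists v. split; auto. now rewrite conjmapM, <- E, conjmapKV.
  - intros (v & Hv & ->). rewrite conjmapM. apply gen_conjmap; auto.
    apply Cw. eauto.
Qed.

End Generation.

Record perm (T : Type) := Perm {
  pfun : T -> T; pfun_inv : T -> T;
  pfunK : forall x, pfun (pfun_inv x) = x; pfun_invK : forall x, pfun_inv (pfun x) = x }.
Arguments pfun {T}. Arguments pfun_inv {T}. Arguments pfunK {T}. Arguments pfun_invK {T}.

Lemma perm_ext {T} (p q : perm T) : pfun p = pfun q -> pfun_inv p = pfun_inv q -> p = q.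
Proof. destruct p, q; simpl; intros; subst. f_equal; apply proof_irrelevance. Qed.

Lemma perm_ext_fun {T} (p q : perm T) : pfun p = pfun q -> p = q.
Proof.
  intro E. apply perm_ext; auto. apply functional_extensionality. intro x.
  rewrite <- (pfunK q x) at 1. rewrite <- E. apply pfun_invK.
Qed.

Definition perm_mul {T} (p q : perm T) : perm T.
Proof.
  refine (Perm _ (fun x => pfun p (pfun q x)) (fun x => pfun_inv q (pfun_inv p x)) _ _);
    intro x; now rewrite ?pfunK, ?pfun_invK, ?pfunK, ?pfun_invK.
Defined.

Definition perm_one T : perm T :=
  Perm T (fun x => x) (fun x => x) (fun _ => eq_refl) (fun _ => eq_refl).

Definition perm_inv {T} (p : perm T) : perm T :=
  Perm T (pfun_inv p) (pfun p) (pfun_invK p) (pfunK p).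

Definition perm_group (T : Type) : Group.
Proof.
  refine (@Build_Group (perm T) perm_mul (perm_one T) perm_inv _ _ _ _ _);
    intros; apply perm_ext_fun; simpl; apply functional_extensionality; intros;
    now rewrite ?pfunK, ?pfun_invK.
Defined.

Section TitsRepresentation.
Context {W : Group}.
Implicit Types (L M : list W) (r s t : W).

Definition eqc (x y : W) : bool := if excluded_middle_informative (x = y) then true else false.

Lemma eqc_true x y : eqc x y = true <-> x = y.
Proof. unfold eqc; destruct excluded_middle_informative; split; congruence. Qed.

Lemma eqc_iff x y x' y' : (x = y <-> x' = y') -> eqc x y = eqc x' y'.
Proof. intro H. unfold eqc; do 2 destruct excluded_middle_informative; tauto. Qed.

(* For a word of involutions, [refl_parity [a1; ...; an] r] is the parity of the
   number of indices i with [a1 ... a(i-1) ai a(i-1) ... a1 = r]. *)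
Fixpoint refl_parity L r : bool :=
  match L with
  | [] => false
  | a :: L => xorb (eqc a r) (refl_parity L (a ** (r ** a)))
  end.

Definition tits_act s (p : W * bool) : W * bool :=
  (s ** (fst p ** s), xorb (snd p) (eqc s (fst p))).

Definition tits_act_inv s (p : W * bool) : W * bool :=
  (ginv s ** (fst p ** ginv s), xorb (snd p) (eqc s (ginv s ** (fst p ** ginv s)))).

Fixpoint tits_word L (p : W * bool) : W * bool :=
  match L with [] => p | a :: L => tits_act a (tits_word L p) end.

Lemma tits_wordE (X : W -> Prop) L r e : involutions X -> Forall X L ->
  tits_word L (r, e) =
  (wprod L ** (r ** ginv (wprod L)),
   xorb e (refl_parity L (wprod L ** (r ** ginv (wprod L))))).
Proof.
  intros HX HL. induction HL as [|a L Ha HL IH]; simpl.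
  - gsimpl. now rewrite xorb_false_r.
  - pose proof (HX a Ha) as Haa.
    rewrite IH. unfold tits_act; simpl. gsimpl. rewrite (ginv_invol a Haa).
    f_equal.
    set (y := wprod L ** (r ** ginv (wprod L))).
    replace (a ** (wprod L ** (r ** (ginv (wprod L) ** a)))) with (a ** (y ** a))
      by (unfold y; now gsimpl).
    rewrite (eqc_iff a (a ** (y ** a)) a y).
    + now destruct e, (refl_parity L y), (eqc a y).
    + split; intro E.
      * apply (gmul_injr a). now rewrite <- (gmul_involK a (y ** a) Haa), <- E.
      * rewrite <- E. now gsimpl.
Qed.

Definition tits_perm s : perm (W * bool).
Proof.
  refine (Perm _ (tits_act s) (tits_act_inv s) _ _); intros [r e];
    unfold tits_act, tits_act_inv; simpl; f_equal; gsimpl; auto.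
  - now destruct e, (eqc s (ginv s ** (r ** ginv s))).
  - now destruct e, (eqc s r).
Defined.

Fixpoint xsum (g : nat -> bool) (n : nat) : bool :=
  match n with 0 => false | S k => xorb (g 0) (xsum (fun i => g (S i)) k) end.

Lemma xsum_ext g h n : (forall i, g i = h i) -> xsum g n = xsum h n.
Proof.
  revert g h; induction n as [|n IH]; simpl; intros g h E; auto.
  rewrite E. f_equal. now apply IH.
Qed.

Lemma xsumD g a b : xsum g (a + b) = xorb (xsum g a) (xsum (fun i => g (a + i)) b).
Proof.
  revert g; induction a as [|a IH]; simpl; intros g.
  - now apply xsum_ext.
  - now rewrite IH, xorb_assoc.
Qed.

Fixpoint alt_word s t n : list W :=
  match n with 0 => [] | S k => s :: t :: alt_word s t k end.

Lemma wprod_alt_word s t n : wprod (alt_word s t n) = gpow (s ** t) n.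
Proof. induction n as [|n IH]; simpl; auto. rewrite IH. now gsimpl. Qed.

(* The reflection sequence of [s t s t ...] (length 2n) is [(st)^i s], i < 2n. *)
Lemma refl_parity_alt_word s t n r : s ** s = gone -> t ** t = gone ->
  refl_parity (alt_word s t n) r = xsum (fun i => eqc (gpow (s ** t) i ** s) r) (n + n).
Proof.
  intros Hs Ht. revert r; induction n as [|n IH]; intros r; simpl; auto.
  rewrite Nat.add_succ_r. simpl. f_equal.
  - apply eqc_iff. gsimpl. tauto.
  - f_equal.
    + apply eqc_iff. gsimpl. split; intro E.
      * rewrite E. now gsimpl.
      * rewrite <- E. now gsimpl.
    + rewrite IH. apply xsum_ext. intro i. apply eqc_iff. simpl.
      set (X := gpow (s ** t) i).
      assert (C : forall y, X ** (s ** (t ** y)) = s ** (t ** (X ** y))).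
      { intro y. replace (X ** (s ** (t ** y))) with (X ** (s ** t) ** y) by now gsimpl.
        unfold X. rewrite gpow_commute. now gsimpl. }
      split; intro E.
      * gsimpl. rewrite <- (C s), <- (gmulA_r X s), E. now gsimpl.
      * rewrite <- E. gsimpl. rewrite <- (C t). now gsimpl.
Qed.

Lemma pfun_gpow_tits_perm s t n :
  pfun (@gpow (perm_group (W * bool)) (@gmul (perm_group _) (tits_perm s) (tits_perm t)) n) =
  tits_word (alt_word s t n).
Proof.
  induction n as [|n IH]; simpl; auto. apply functional_extensionality; intro x.
  now rewrite <- IH.
Qed.

Lemma tits_perm_dihedral s t n : s ** s = gone -> t ** t = gone -> gpow (s ** t) n = gone ->
  @gpow (perm_group (W * bool)) (@gmul (perm_group _) (tits_perm s) (tits_perm t)) n = gone.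
Proof.
  intros Hs Ht Hn. apply perm_ext_fun. rewrite pfun_gpow_tits_perm.
  apply functional_extensionality. intros [r e].
  assert (HF : Forall (fun a => a ** a = gone) (alt_word s t n))
    by (clear Hn; induction n; simpl; auto).
  rewrite (tits_wordE _ _ _ _ (fun a Ha => Ha) HF), wprod_alt_word, Hn.
  gsimpl. rewrite refl_parity_alt_word, xsumD by auto.
  rewrite (xsum_ext (fun i => eqc (gpow (s ** t) (n + i) ** s) r)
                    (fun i => eqc (gpow (s ** t) i ** s) r)).
  - now rewrite xorb_nilpotent, xorb_false_r.
  - intro i. now rewrite gpowD, Hn, gmul1l.
Qed.

End TitsRepresentation.

Lemma refl_parity_delete {W : Group} (X : W -> Prop) L r :
  involutions X -> Forall X L -> refl_parity L r = true ->
  exists L1 a L2, L = L1 ++ a :: L2 /\ r ** wprod L = wprod (L1 ++ L2).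
Proof.
  intros HX HL. revert r. induction HL as [|a L Ha HL IH]; simpl; intros r Hp; [discriminate|].
  pose proof (HX a Ha) as Haa. destruct (eqc a r) eqn:D.
  - apply eqc_true in D. subst. exists [], r, L. split; auto. simpl. now gsimpl.
  - destruct (IH _ Hp) as (L1 & b & L2 & -> & E).
    exists (a :: L1), b, L2. split; auto. simpl. rewrite <- E. now gsimpl.
Qed.

Lemma app_eq_app_cons {T : Type} (X L P1 P2 : list T) b : X ++ L = P1 ++ b :: P2 ->
  (exists l, X = P1 ++ b :: l /\ P2 = l ++ L) \/ (exists l, L = l ++ b :: P2 /\ P1 = X ++ l).
Proof.
  intro E. destruct (app_eq_app X L P1 (b :: P2) E) as (l & [[E1 E2]|[E1 E2]]).
  - destruct l as [|c l].
    + right. exists []. simpl in *. rewrite app_nil_r in *. now subst.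
    + left. simpl in E2. injection E2 as -> ->. now exists l.
  - right. now exists l.
Qed.

Lemma word_length_le1_mem {W : Group} (J : W -> Prop) T :
  Forall J T -> length T <= 1 -> wprod T <> gone -> J (wprod T).
Proof.
  intros HT Hl Hne. destruct T as [|a [|a' T]]; simpl in *; try lia; [easy|].
  rewrite gmul1r. now inversion HT.
Qed.

Definition conj_set_eq {W : Group} (J I : W -> Prop) (w : W) : Prop :=
  (forall s, I s -> J (conjmap w s)) /\ (forall b, J b -> exists s, I s /\ b = conjmap w s).

Section Coxeter.
Context {W : Group}.
Variable S : W -> Prop.
Hypothesis HS : coxeter_system S.
Implicit Types (I J : W -> Prop) (L M : list W).

Lemma coxeter_involutions : involutions S.
Proof. intros s Hs. apply (proj1 HS s Hs). Qed.

Lemma coxeter_gen_neq1 s : S s -> s <> gone.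
Proof. intro Hs. apply (proj1 HS s Hs). Qed.

Lemma tits_representation : exists phi : W -> perm_group (W * bool),
  forall L, Forall S L -> pfun (phi (wprod L)) = tits_word L.
Proof.
  destruct HS as (Hinv & _ & Huniv).
  destruct (Huniv (perm_group (W * bool)) tits_perm) as (phi & Hmul & Hgen).
  { intros s t n Hs Ht. apply tits_perm_dihedral; apply Hinv; auto. }
  exists phi. assert (Hphi1 : phi gone = gone).
  { apply (gmul_injl (phi gone)). rewrite <- Hmul. now rewrite !gmul1r. }
  induction 1 as [|a L Ha HL IH]; simpl.
  - now rewrite Hphi1.
  - now rewrite Hmul, Hgen, <- IH.
Qed.

(* The Tits action of [wprod L] on [(wprod L)^-1 r wprod L, false] reads off
   [refl_parity L r], so this parity depends only on [wprod L]. *)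
Lemma refl_parity_wprod L M r : Forall S L -> Forall S M -> wprod L = wprod M ->
  refl_parity L r = refl_parity M r.
Proof.
  intros HL HM E. destruct tits_representation as (phi & Hphi).
  assert (E2 : tits_word L = tits_word M) by now rewrite <- !Hphi, E.
  set (w := wprod L).
  pose proof (f_equal (fun f => snd (f (ginv w ** (r ** w), false))) E2) as F. simpl in F.
  rewrite (tits_wordE S L), (tits_wordE S M) in F by (auto; apply coxeter_involutions).
  simpl in F. rewrite <- E in F. fold w in F. now gsimpl_in F.
Qed.

Definition reduced L : Prop :=
  Forall S L /\ forall M, Forall S M -> wprod M = wprod L -> length L <= length M.

Lemma reduced_cons_inv a L : reduced (a :: L) -> reduced L.
Proof.
  intros [HF HR]. inversion HF as [|? ? Ha HL]; subst. split; auto. intros M HM EM.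
  specialize (HR (a :: M) (Forall_cons _ Ha HM)). simpl in HR. rewrite EM in HR.
  specialize (HR eq_refl). lia.
Qed.

Lemma exchange_condition L s M : reduced L -> S s -> Forall S M ->
  wprod M = s ** wprod L -> length M <= length L ->
  exists L1 a L2, L = L1 ++ a :: L2 /\ s ** wprod L = wprod (L1 ++ L2).
Proof.
  intros [HL HR] Hs HM EM Hlen. pose proof coxeter_involutions as HI.
  destruct (refl_parity L s) eqn:P; [eapply refl_parity_delete; eauto|exfalso].
  assert (P2 : refl_parity (s :: L) s = true).
  { simpl. rewrite (gmul_involK s s (HI s Hs)), P. now rewrite (proj2 (eqc_true s s)). }
  rewrite (refl_parity_wprod (s :: L) M) in P2 by (simpl; auto).
  destruct (refl_parity_delete S M s HI HM P2) as (M1 & b & M2 & -> & E).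
  rewrite EM, (gmul_involK s) in E by auto.
  apply Forall_app in HM as [HM1 HM2]. inversion HM2; subst.
  specialize (HR (M1 ++ M2) (proj2 (Forall_app _ _ _) (conj HM1 H2)) (eq_sym E)).
  rewrite !length_app in *. simpl in *. lia.
Qed.

Lemma reduced_word_of J L : (forall x, J x -> S x) -> Forall J L ->
  exists L', Forall J L' /\ reduced L' /\ wprod L' = wprod L.
Proof.
  intros HJ. remember (length L) as n eqn:En. revert L En.
  induction n as [n IH] using lt_wf_ind; intros L En HL.
  destruct L as [|a L0].
  { exists []. repeat split; auto. intros; simpl; lia. }
  inversion HL as [|? ? Ha HL0]; subst. simpl in IH.
  destruct (IH (length L0) (Nat.lt_succ_diag_r _) L0 eq_refl HL0) as (L0' & HJ0 & HR0 & E0).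
  assert (Hle : length L0' <= length L0)
    by (apply HR0; auto; eapply Forall_impl; eauto).
  destruct (classic (exists M, Forall S M /\ wprod M = a ** wprod L0' /\
                                length M <= length L0')) as [(M & HM & EM & LM)|NM].
  - destruct (exchange_condition L0' a M HR0 (HJ a Ha) HM EM LM) as (P1 & b & P2 & -> & E2).
    apply Forall_app in HJ0 as [HJ1 HJ2]. inversion HJ2; subst.
    rewrite length_app in Hle. simpl in Hle.
    destruct (IH (length (P1 ++ P2)) ltac:(rewrite length_app; lia) (P1 ++ P2) eq_refl
      ltac:(now apply Forall_app)) as (L' & ? & ? & E').
    exists L'. split; [|split]; auto. simpl. now rewrite E', <- E2, E0.
  - exists (a :: L0'). repeat split; auto.
    + constructor; [apply HJ, Ha|apply HR0].
    + intros M HM EM. simpl in *.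
      destruct (le_lt_dec (Datatypes.S (length L0')) (length M)); auto.
      exfalso. apply NM. exists M. repeat split; auto. lia.
    + simpl. now rewrite E0.
Qed.

Lemma gen_reduced_word J x : (forall x, J x -> S x) -> gen J x ->
  exists L, Forall J L /\ reduced L /\ wprod L = x.
Proof.
  intros HJ Hx. destruct (gen_word J x) as (L & HL & <-); auto.
  - intros s Hs. apply coxeter_involutions, HJ, Hs.
  - now apply reduced_word_of.
Qed.

Lemma gen_generator_mem J b : (forall x, J x -> S x) -> S b -> gen J b -> J b.
Proof.
  intros HJ Hb Gb. destruct (gen_reduced_word J b HJ Gb) as (T & HT & [_ HRT] & <-).
  apply word_length_le1_mem; auto.
  - apply (HRT [wprod T]); [now repeat constructor|]. simpl. now rewrite gmul1r.
  - now apply coxeter_gen_neq1.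
Qed.

Definition min_coset_rep J w L : Prop :=
  reduced L /\ gen J (wprod L ** ginv w) /\
  forall M, Forall S M -> gen J (wprod M ** ginv w) -> length L <= length M.

Lemma min_coset_rep_exists J w : exists L, min_coset_rep J w L.
Proof.
  pose (P := fun n => exists L, Forall S L /\ gen J (wprod L ** ginv w) /\ length L = n).
  destruct (dec_inh_nat_subset_has_unique_least_element P (fun n => classic (P n)))
    as (n & [(L & HL & GL & <-) Hmin] & _).
  - destruct (gen_word S w coxeter_involutions (proj1 (proj2 HS) w)) as (L & HL & E).
    exists (length L), L. repeat split; auto. rewrite E, gmulVr. apply gen1.
  - exists L. split; [split|split]; auto.
    + intros M HM EM. apply Hmin. exists M. now rewrite EM.
    + intros M HM GM. apply Hmin. now exists M.
Qed.

(* For x in <J>, any shorter expression of [x w1] would yield a shorter element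
   of <J> w, so lengths add. *)
Lemma reduced_app_min_coset_rep J w L1 X : (forall x, J x -> S x) ->
  min_coset_rep J w L1 -> Forall J X -> reduced X -> reduced (X ++ L1).
Proof.
  intros HJ (HR1 & HG1 & Hmin) HX. induction HX as [|a X' Ha HX' IH]; intros HRX; simpl; auto.
  specialize (IH (reduced_cons_inv a X' HRX)).
  split; [constructor; [apply HJ, Ha|apply IH]|].
  intros M HM EM. simpl in EM |- *.
  destruct (le_lt_dec (Datatypes.S (length (X' ++ L1))) (length M)) as [|Lt]; auto. exfalso.
  destruct (exchange_condition (X' ++ L1) a M IH (HJ a Ha) HM EM) as (P1 & b & P2 & E1 & E2);
    [lia|].
  destruct (app_eq_app_cons X' L1 P1 P2 b E1) as [(l & -> & ->)|(l & -> & ->)].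
  - (* the deleted letter lies in X: [a X'] would not be reduced *)
    rewrite app_assoc, !(wprod_app _ L1), <- gmulA_r in E2. apply gmul_injr in E2.
    destruct HRX as [_ HRX].
    apply Forall_app in HX' as [HX1 HX2]. inversion HX2; subst.
    assert (HF : Forall S (P1 ++ l))
      by (apply Forall_app; split; eapply Forall_impl; eauto).
    specialize (HRX (P1 ++ l) HF (eq_sym E2)).
    simpl in HRX. rewrite !length_app in HRX. simpl in HRX. lia.
  - (* the deleted letter lies in L1: a shorter element of <J> w *)
    rewrite <- app_assoc, !wprod_app in E2.
    destruct HR1 as [HF1 _]. apply Forall_app in HF1 as [HF1 HF2]. inversion HF2; subst.
    assert (HF : Forall S (l ++ P2)) by (apply Forall_app; auto).
    assert (HG : gen J (wprod (l ++ P2) ** ginv w)).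
    { replace (wprod (l ++ P2) ** ginv w)
        with (conjmap (ginv (wprod X')) a ** (wprod (l ++ b :: P2) ** ginv w)).
      - apply genM; auto. apply gen_conjmap; [apply genV, gen_wprod; auto|now apply gen_base].
      - rewrite !wprod_app, <- (gmulK (wprod X') (wprod l ** wprod P2)), <- E2, conjmapE.
        now gsimpl. }
    specialize (Hmin (l ++ P2) HF HG). rewrite !length_app in Hmin. simpl in Hmin. lia.
Qed.

Lemma min_coset_rep_conj_set_eq I J w L1 : (forall x, I x -> S x) -> (forall x, J x -> S x) ->
  min_coset_rep J w L1 -> conj_gen_eq J I (wprod L1) -> conj_set_eq J I (wprod L1).
Proof.
  intros HI HJ Hmin C. set (w1 := wprod L1).
  assert (Hgen : forall s, I s -> J (conjmap w1 s)).
  { intros s Hs. set (t := conjmap w1 s).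
    assert (Gt : gen J t) by (apply C; exists s; split; auto using gen_base).
    destruct (gen_reduced_word J t HJ Gt) as (T & HT & HRT & ET).
    destruct (reduced_app_min_coset_rep J w L1 T HJ Hmin HT HRT) as [_ HR].
    assert (HF : Forall S (L1 ++ [s])) by (apply Forall_app; split; [apply Hmin|auto]).
    assert (E : wprod (L1 ++ [s]) = wprod (T ++ L1))
      by (rewrite !wprod_app, ET; unfold t; rewrite conjmapE; simpl; now gsimpl).
    specialize (HR _ HF E). rewrite !length_app in HR. simpl in HR.
    rewrite <- ET. apply word_length_le1_mem; auto; [lia|].
    rewrite ET. intro E1. apply (coxeter_gen_neq1 s (HI s Hs)).
    unfold t in E1. rewrite <- (conjmapK w1 s), E1, conjmapE. now gsimpl. }
  split; auto.
  intros b Hb. apply (gen_generator_mem (fun y => exists s, I s /\ y = conjmap w1 s)).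
  - intros y (s & Hs & ->). apply HJ, Hgen, Hs.
  - now apply HJ.
  - destruct (proj1 (C b) (gen_base J b Hb)) as (v & Hv & ->). now apply gen_conjmap_image.
Qed.

Theorem parabolic_conjugation I J w : (forall x, I x -> S x) -> (forall x, J x -> S x) ->
  conj_gen_eq J I w -> exists c, gen J c /\ conj_set_eq J I (c ** w).
Proof.
  intros HI HJ C. destruct (min_coset_rep_exists J w) as (L1 & Hmin).
  exists (wprod L1 ** ginv w). split; [apply Hmin|].
  replace (wprod L1 ** ginv w ** w) with (wprod L1) by now gsimpl.
  apply (min_coset_rep_conj_set_eq I J w); auto.
  replace (wprod L1) with (wprod L1 ** ginv w ** w) by now gsimpl.
  apply conj_gen_eq_mul_l; auto. apply Hmin.
Qed.

End Coxeter.

Section InnerByGraph.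
Context {W : Group}.

Lemma pair_iso_conj_twist (A B : W -> Prop) v f y :
  conj_gen_eq A B v -> pair_iso A B f -> gen A y ->
  (forall a, A a -> A (conjmap (ginv y) (conjmap v (f a)))) ->
  (forall b, A b -> exists a, A a /\ conjmap (ginv y) (conjmap v (f a)) = b) ->
  pair_iso A A (fun w => conjmap (ginv y) (conjmap v (f w))).
Proof.
  intros CB (Hf_gen & Hf_mul & Hf_inj & Hf_onto & _) Hy Hgen Honto.
  split; [|split; [|split; [|split]]]; auto.
  - intros x Hx. apply gen_conjmap; [now apply genV|]. apply CB. eauto.
  - intros x1 x2 H1 H2. now rewrite Hf_mul, !conjmap_mul.
  - intros x1 x2 H1 H2 E. now apply Hf_inj, (conjmap_inj v), (conjmap_inj (ginv y)).
  - intros z Hz. destruct (proj1 (CB (conjmap y z))) as (z' & Hz' & E).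
    { now apply gen_conjmap. }
    destruct (Hf_onto z' Hz') as (x & Hx & <-). exists x. split; auto.
    now rewrite <- E, conjmapK.
Qed.

Lemma inner_by_graph_transfer (S' A A' Ab' : W -> Prop) u ub alpha alphab :
  coxeter_system S' -> (forall x, A' x -> S' x) -> (forall x, Ab' x -> S' x) ->
  conj_gen_eq A A' u -> conj_gen_eq A Ab' ub ->
  pair_iso A A' alpha -> pair_iso A Ab' alphab ->
  inner_by_graph A (fun w => conjmap u (alpha w)) ->
  inner_by_graph A (fun w => conjmap ub (alphab w)).
Proof.
  intros HS' HA' HAb' CA CB Halpha Halphab (x & beta & Hx & Hbeta & Hdec).
  destruct (parabolic_conjugation S' HS' A' Ab' (ginv ub ** u) HA' HAb'
              (conj_gen_eq_quot A A' Ab' u ub CA CB)) as (c & Hc & Hto & Hfrom).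
  set (w1 := c ** (ginv ub ** u)) in *.
  set (y := conjmap ub c ** x).
  assert (Hy : gen A y) by (apply genM; auto; apply CB; eauto).
  assert (Hbeta_eq : forall a, A a ->
            conjmap (ginv y) (conjmap ub (conjmap w1 (alpha a))) = beta a).
  { intros a Ha. rewrite <- !conjmapM.
    replace (ginv y ** ub ** w1) with (ginv x ** u) by (unfold y, w1; rewrite conjmapE; now gsimpl).
    now rewrite conjmapM, Hdec, conjmapK by now apply gen_base. }
  destruct Halpha as (_ & _ & _ & _ & Halpha_gen & Halpha_onto).
  destruct Hbeta as (_ & _ & _ & _ & Hbeta_gen & Hbeta_onto).
  pose proof Halphab as (_ & _ & _ & _ & Halphab_gen & Halphab_onto).
  exists y, (fun w => conjmap (ginv y) (conjmap ub (alphab w))).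
  split; [exact Hy|split].
  - apply pair_iso_conj_twist with Ab'; auto.
    + intros a Ha. destruct (Hfrom _ (Halphab_gen a Ha)) as (s & Hs & ->).
      destruct (Halpha_onto s Hs) as (a' & Ha' & <-).
      rewrite Hbeta_eq; auto.
    + intros b Hb. destruct (Hbeta_onto b Hb) as (a' & Ha' & <-).
      destruct (Halphab_onto _ (Hto _ (Halpha_gen a' Ha'))) as (a & Ha & Ea).
      exists a. split; auto. rewrite Ea. now apply Hbeta_eq.
  - intros w Hw. symmetry. apply conjmapKV.
Qed.

End InnerByGraph.

Theorem lemma7p7 (W : Group) (S S' A A' Ab' : W -> Prop) (u ub : W)
    (alpha alphab : W -> W) :
  coxeter_system S -> finite_set S ->
  coxeter_system S' ->
  (forall s, S' s -> reflections S s) ->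
  simplex S A -> irreducible A ->
  simplex S' A' -> irreducible A' ->
  simplex S' Ab' -> irreducible Ab' ->
  conj_gen_eq A A' u -> conj_gen_eq A Ab' ub ->
  pair_iso A A' alpha -> pair_iso A Ab' alphab ->
  (inner_by_graph A (fun w => conjmap u (alpha w)) <->
   inner_by_graph A (fun w => conjmap ub (alphab w))).
Proof.
  intros _ _ HS' _ _ _ [HA' _] _ [HAb' _] _ CA CB Halpha Halphab.
  split.
  - exact (inner_by_graph_transfer S' A A' Ab' u ub alpha alphab HS' HA' HAb' CA CB Halpha Halphab).
  - exact (inner_by_graph_transfer S' A Ab' A' ub u alphab alpha HS' HAb' HA' CB CA Halphab Halpha).
Qed.
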